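(* Fix $k$, $\theta^{(k)}\in\mathbb{R}^d$, step sizes $h_k,h_{k-1}>0$, $\beta_k\ge 0$, and a vector $p^{(k-1)}\in\mathbb{R}^d$; set $\theta^{(k-1)}=\theta^{(k)}-h_{k-1}p^{(k-1)}$. Define the natural Heavy-Ball momentum $$p^{(k)}=\beta_k\,G_X^{(k)\dagger}G_X^{(k,k-1)}p^{(k-1)}-h_k\,G^{(k)\dagger}\nabla L(\theta^{(k)})$$ and the quasi-natural Heavy-Ball momentum $$\overline{p^{(k)}}=\beta_k\,p^{(k-1)}-h_k\,G^{(k)\dagger}\nabla L(\theta^{(k)}).$$ Then $$\big\|\psi^{(k)T}\overline{p^{(k)}}-\psi^{(k)T}p^{(k)}\big\|_X\le h_{k-1}\,\beta_k\,\kappa_{\max}(\theta^{(k)})\,\|p^{(k-1)}\|_2^2+o\big(h_{k-1}\|p^{(k-1)}\|_2^2\big),$$ where the remainder $o(h_{k-1}\|p^{(k-1)}\|_2^2)$ is understood as $h_{k-1}\|p^{(k-1)}\|_2\to 0$ with $\theta^{(k)}$ fixed.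
   Context: $D:\mathbb{R}^d\to H$ is a twice continuously Fréchet differentiable map into a space $H$ of functions equipped with an inner product $(\cdot,\cdot)_X$ and norm $\|\cdot\|_X$ (the model class is $\mathcal{M}=D(\mathbb{R}^d)$). Write $\psi(\theta)=(\psi_1(\theta),\dots,\psi_d(\theta))$ with $\psi_i(\theta)=\frac{\partial D}{\partial\theta_i}(\theta)$, and for $c\in\mathbb{R}^d$, $\psi(\theta)^Tc=\sum_i c_i\psi_i(\theta)$. Let $\psi^{(j)}=\psi(\theta^{(j)})$. $G_X^{(k)}$ is the $d\times d$ Gram matrix with entries $(\psi^{(k)}_i,\psi^{(k)}_j)_X$, $G_X^{(k,k-1)}$ is the cross-Gram matrix with entries $(\psi^{(k)}_i,\psi^{(k-1)}_j)_X$, and $\dagger$ denotes the Moore–Penrose pseudo-inverse. $G^{(k)}$ is any symmetric positive semi-definite $d\times d$ matrix (Gram matrix of $\psi^{(k)}$ for some inner product $W$) and $\nabla L(\theta^{(k)})\in\mathbb{R}^d$ is the gradient of the parameter loss $L=\mathcal{L}\circ D$; these terms are the same in both momenta. $H_D(\theta):\mathbb{R}^d\times\mathbb{R}^d\to H$ denotes the second derivative (Hessian) of $D$ at $\theta$, and the maximal curvature is $\kappa_{\max}(\theta)=\max_{q\in\mathbb{R}^d,\|q\|_2=1}\|H_D(\theta)(q,q)\|_X$. *)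

From HB Require Import structures.
From mathcomp Require Import all_boot all_order all_algebra.
From mathcomp Require Import all_classical all_reals all_analysis.
Set Implicit Arguments. Unset Strict Implicit. Unset Printing Implicit Defensive.
Import Order.TTheory GRing.Theory Num.Theory.
Import numFieldNormedType.Exports.
Local Open Scope classical_set_scope.
Local Open Scope ring_scope.

Section Defs.
Context {R : realType}.

Definition is_inner_product (H : normedModType R) (ip : H -> H -> R) : Prop :=
  [/\ (forall x y, ip x y = ip y x),
      (forall (a : R) (x y z : H), ip (a *: x + y) z = a * ip x z + ip y z) &
      (forall x, ip x x = `|x| ^+ 2)].

Definition evec (d : nat) (i : 'I_d) : 'cV[R]_d := delta_mx i 0.

Definition norm2 (d : nat) (c : 'cV[R]_d) : R := Num.sqrt (\sum_i c i 0 ^+ 2).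

Variable H : normedModType R.

Definition psi (d : nat) (D : 'cV[R]_d -> H) (th : 'cV[R]_d) (i : 'I_d) : H :=
  'd D th (evec i).

Definition psiT (d : nat) (D : 'cV[R]_d -> H) (th c : 'cV[R]_d) : H :=
  \sum_i c i 0 *: psi D th i.

Definition hessD (d : nat) (D : 'cV[R]_d -> H) (th u v : 'cV[R]_d) : H :=
  'd (fun x => 'd D x v) th u.

Definition C2 (d : nat) (D : 'cV[R]_d -> H) : Prop :=
  [/\ (forall x, differentiable D x),
      (forall v x, differentiable (fun y => 'd D y v) x) &
      (forall u v, continuous (fun x => hessD D x u v))].

Definition gram (d : nat) (ip : H -> H -> R) (D : 'cV[R]_d -> H)
  (th1 th2 : 'cV[R]_d) : 'M[R]_d :=
  \matrix_(i, j) ip (psi D th1 i) (psi D th2 j).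

Definition kappa_max (d : nat) (D : 'cV[R]_d -> H) (th : 'cV[R]_d) : R :=
  sup [set `|hessD D th q q| | q in [set q : 'cV[R]_d | norm2 q = 1]].

Definition gradL (d : nat) (Lf : H -> R) (D : 'cV[R]_d -> H) (th : 'cV[R]_d)
  : 'cV[R]_d := \col_i 'd (Lf \o D) th (evec i).

End Defs.

Definition penrose {R : realType} (d : nat) (A B : 'M[R]_d) : Prop :=
  [/\ A *m B *m A = A, B *m A *m B = B, (A *m B)^T = A *m B & (B *m A)^T = B *m A].

Definition mp_pinv {R : realType} (d : nat) (A : 'M[R]_d) : 'M[R]_d :=
  xget 0 [set B | penrose A B].

Definition sym_psd {R : realType} (d : nat) (A : 'M[R]_d) : Prop :=
  A^T = A /\ forall c : 'cV[R]_d, 0 <= (c^T *m A *m c) 0 0.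

(* The two momenta differ by beta (p - B C p), where B is the pseudo-inverse
   of the Gram matrix of psi(theta_k) and C the cross-Gram matrix with
   psi(theta_(k-1)).  Mapped through psi(theta_k)^T, the vector B C p becomes the
   orthogonal projection of psi(theta_(k-1))^T p onto the span of psi(theta_k),
   so its distance to psi(theta_k)^T p is at most that of psi(theta_(k-1))^T p.
   Since theta_(k-1) = theta_k - h p, a first-order Taylor expansion of psi at
   theta_k shows that this last distance is |h H_D(theta_k)(p, p)| + o(h |p|^2),
   and |H_D(theta_k)(p, p)| <= kappa_max(theta_k) |p|^2. *)

From HB Require Import structures.
From mathcomp Require Import all_boot all_order all_algebra.
From mathcomp Require Import all_classical all_reals all_analysis.
From mathcomp Require Import ring.
Import Order.TTheory GRing.Theory Num.Theory.
Import numFieldNormedType.Exports.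
Local Open Scope ring_scope.

Set Implicit Arguments.
Unset Strict Implicit.
Unset Printing Implicit Defensive.

Lemma trmx_mul_row_free (R : realFieldType) r n (M : 'M[R]_(r, n)) :
  row_free M -> M *m M^T \in unitmx.
Proof.
move=> freeM; rewrite -row_free_unit -kermx_eq0; apply/eqP/row_matrixP => i.
rewrite row0; set u := row i _.
have uMMt0 : u *m (M *m M^T) = 0 by rewrite /u -row_mul mulmx_ker row0.
have uM0 : ((u *m M) *m (u *m M)^T) 0 0 = 0.
  by rewrite trmx_mul mulmxA -(mulmxA u) uMMt0 mul0mx mxE.
suff : u *m M = 0 by move/eqP; rewrite mulmx_free_eq0 // => /eqP.
apply/rowP => j; rewrite mxE; move: uM0; rewrite mxE => /psumr_eq0P.
have sq_ge0 k : true -> 0 <= (u *m M) 0 k * (u *m M)^T k 0.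
  by move=> _; rewrite !mxE -expr2 sqr_ge0.
by move=> /(_ sq_ge0 j isT) /eqP; rewrite !mxE mulf_eq0 orbb => /eqP.
Qed.

Lemma penrose_rank_factor (R : realType) n r (F : 'M[R]_(n, r)) (G : 'M[R]_(r, n)) :
  row_free F^T -> row_free G -> exists B, penrose (F *m G) B.
Proof.
move=> freeFt freeG.
have uF : F^T *m F \in unitmx by rewrite -[X in _ *m X]trmxK trmx_mul_row_free.
have uG : G *m G^T \in unitmx by rewrite trmx_mul_row_free.
set X := G^T *m invmx (G *m G^T); set Y := invmx (F^T *m F) *m F^T.
have GX : G *m X = 1%:M by rewrite /X mulmxA mulmxV.
have YF : Y *m F = 1%:M by rewrite /Y -mulmxA mulVmx.
have AB : F *m G *m (X *m Y) = F *m Y by rewrite -mulmxA (mulmxA G) GX mul1mx.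
have BA : X *m Y *m (F *m G) = X *m G by rewrite mulmxA -(mulmxA X) YF mulmx1.
exists (X *m Y); split.
- by rewrite AB mulmxA -(mulmxA F) YF mulmx1.
- by rewrite BA -mulmxA (mulmxA G) GX mul1mx.
- by rewrite AB trmx_mul /Y trmx_mul trmxK trmx_inv trmx_mul trmxK mulmxA.
- by rewrite BA trmx_mul /X trmx_mul trmxK trmx_inv trmx_mul trmxK mulmxA.
Qed.

Lemma penrose_exists (R : realType) n (A : 'M[R]_n) : exists B, penrose A B.
Proof.
rewrite -{1}(mulmx_base A); apply: penrose_rank_factor (row_base_free A).
by rewrite /row_free mxrank_tr; apply: col_base_full.
Qed.

Lemma penrose_unique (R : realType) n (A B C : 'M[R]_n) :
  penrose A B -> penrose A C -> B = C.
Proof.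
move=> [B1 B2 B3 B4] [C1 C2 C3 C4].
have eB : B = B *m A *m C.
  have BBtAt : B = B *m (B^T *m A^T) by rewrite -trmx_mul B3 mulmxA B2.
  have AtACt : A^T = A^T *m (A *m C)^T by rewrite -trmx_mul C1.
  rewrite {1}BBtAt {1}AtACt (mulmxA B^T) -trmx_mul B3 C3.
  by rewrite !mulmxA B2.
have eC : C = B *m A *m C.
  have AtCtC : C = A^T *m C^T *m C by rewrite -trmx_mul C4 C2.
  have BAAt : A^T = (B *m A)^T *m A^T by rewrite -trmx_mul mulmxA B1.
  rewrite {1}AtCtC {1}BAAt -(mulmxA _ A^T) -trmx_mul C4 B4.
  by rewrite -!mulmxA (mulmxA C) C2.
by rewrite {1}eB -eC.
Qed.

Lemma penrose_tr (R : realType) n (A B : 'M[R]_n) : penrose A B -> penrose A^T B^T.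
Proof.
move=> [AB1 AB2 AB3 AB4]; split.
- by rewrite -!trmx_mul mulmxA AB1.
- by rewrite -!trmx_mul mulmxA AB2.
- by rewrite -trmx_mul AB4.
- by rewrite -trmx_mul AB3.
Qed.

Lemma mp_pinvP (R : realType) n (A : 'M[R]_n) : penrose A (mp_pinv A).
Proof. by apply: xgetPex; apply: penrose_exists. Qed.

Lemma mp_pinv_sym (R : realType) n (A : 'M[R]_n) : A^T = A -> (mp_pinv A)^T = mp_pinv A.
Proof.
move=> symA; apply: (@penrose_unique _ _ A); last exact: mp_pinvP.
by rewrite -{1}symA; apply/penrose_tr/mp_pinvP.
Qed.

Definition lincomb (R : pzRingType) (V : lmodType R) d (v : 'I_d -> V) (c : 'cV[R]_d) : V :=
  \sum_i c i 0 *: v i.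

Lemma lincomb_is_linear (R : comPzRingType) (V : lmodType R) d (v : 'I_d -> V) :
  linear (lincomb v).
Proof.
move=> a c c'; rewrite /lincomb scaler_sumr -big_split /=.
by apply: eq_bigr => i _; rewrite !mxE scalerDl scalerA.
Qed.

HB.instance Definition _ (R : comPzRingType) (V : lmodType R) d (v : 'I_d -> V) :=
  GRing.isLinear.Build R 'cV[R]_d V *:%R (lincomb v) (lincomb_is_linear v).

Definition gram_mx (R V : Type) (ip : V -> V -> R) d (v w : 'I_d -> V) :
  'M[R]_d := \matrix_(i, j) ip (v i) (w j).

Section InnerProduct.
Variables (R : realType) (H : normedModType R) (ip : H -> H -> R).
Hypothesis ipH : is_inner_product ip.

Lemma ipC x y : ip x y = ip y x.
Proof. by have [] := ipH. Qed.

Lemma ip_norm x : ip x x = `|x| ^+ 2.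
Proof. by have [] := ipH. Qed.

Lemma ipBl x y z : ip (x - y) z = ip x z - ip y z.
Proof.
have [_ lin _] := ipH; have := lin (-1) y x z.
by rewrite scaleN1r mulN1r [- y + x]addrC => ->; rewrite addrC.
Qed.

Lemma ipBr x y z : ip z (x - y) = ip z x - ip z y.
Proof. by rewrite ipC ipBl !(ipC z). Qed.

Lemma ip0l z : ip 0 z = 0.
Proof. by have := ipBl 0 0 z; rewrite !subrr. Qed.

Lemma ip_suml d (c : 'I_d -> R) (v : 'I_d -> H) z :
  ip (\sum_i c i *: v i) z = \sum_i c i * ip (v i) z.
Proof.
have [_ lin _] := ipH.
by elim/big_rec2: _ => [|i y1 y2 _ <-]; rewrite ?ip0l ?lin.
Qed.

Lemma ip_lincomb d (v w : 'I_d -> H) c c' :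
  ip (lincomb v c) (lincomb w c') = (c^T *m gram_mx ip v w *m c') 0 0.
Proof.
rewrite ip_suml mxE; under [RHS]eq_bigr do rewrite mxE big_distrl.
rewrite exchange_big; apply: eq_bigr => i _ /=.
rewrite ipC ip_suml mulr_sumr; apply: eq_bigr => j _.
by rewrite !mxE (ipC (w j)) -mulrA (mulrC (ip _ _)).
Qed.

Lemma ip_lincomb_l d (v : 'I_d -> H) c z :
  ip (lincomb v c) z = (c^T *m \col_i ip (v i) z) 0 0.
Proof. by rewrite ip_suml mxE; apply: eq_bigr => i _; rewrite !mxE. Qed.

Lemma gram_mulmx d (v w : 'I_d -> H) c :
  gram_mx ip v w *m c = \col_i ip (v i) (lincomb w c).
Proof.
apply/colP => i; rewrite !mxE ipC ip_suml; apply: eq_bigr => j _.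
by rewrite !mxE ipC mulrC.
Qed.

Lemma lincomb_eq0_of_gram d (v : 'I_d -> H) z :
  gram_mx ip v v *m z = 0 -> lincomb v z = 0.
Proof.
move=> Pz; apply/eqP; rewrite -normr_eq0 -sqrf_eq0 -ip_norm ip_lincomb.
by rewrite -mulmxA Pz mulmx0 mxE.
Qed.

Lemma norm_le_of_ip_proj e y : ip y y = ip e y -> `|y| <= `|e|.
Proof.
move=> yy; have pythagoras : `|e| ^+ 2 = `|e - y| ^+ 2 + `|y| ^+ 2.
  by rewrite -!ip_norm ipBl !ipBr (ipC y e) -yy opprB addrA !subrK.
by rewrite -ler_sqr ?nnegrE // pythagoras lerDr sqr_ge0.
Qed.

Lemma lincomb_pinv_gram_le d (v w : 'I_d -> H) B p :
  penrose (gram_mx ip v v) B -> B^T = B ->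
  `|lincomb v p - lincomb v (B *m gram_mx ip v w *m p)| <= `|lincomb v p - lincomb w p|.
Proof.
set P := gram_mx ip v v; set C := gram_mx ip v w => -[PBP BPB _ _] symB.
set e := lincomb v p - lincomb w p; set a := \col_i ip (v i) e.
have Ea : a = P *m p - C *m p.
  by apply/colP => i; rewrite !gram_mulmx !mxE ipBr.
have -> : lincomb v p - lincomb v (B *m C *m p) =
          lincomb v (p - B *m P *m p) + lincomb v (B *m a).
  by rewrite -!linearB -linearD /= Ea mulmxBr !mulmxA addrA subrK.
have -> : lincomb v (p - B *m P *m p) = 0.
  by apply: lincomb_eq0_of_gram; rewrite mulmxBr !mulmxA PBP subrr.
(* [lincomb v (B *m a)] is the orthogonal projection of [e] onto the span of [v]. *)
rewrite add0r; apply: norm_le_of_ip_proj.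
rewrite ip_lincomb ipC ip_lincomb_l -/a trmx_mul symB.
have BPBa : B *m (P *m (B *m a)) = B *m a by rewrite !mulmxA BPB.
by rewrite -!mulmxA BPBa.
Qed.

End InnerProduct.

Lemma lincomb_evec (R : realType) d (c : 'cV[R]_d) : lincomb (@evec R d) c = c.
Proof. by rewrite [RHS]matrix_sum_delta; apply: eq_bigr => i _; rewrite big_ord1. Qed.

Lemma norm2_ge0 (R : realType) d (c : 'cV[R]_d) : 0 <= norm2 c.
Proof. exact: sqrtr_ge0. Qed.

Lemma norm2_entry (R : realType) d (c : 'cV[R]_d) i : `|c i 0| <= norm2 c.
Proof.
rewrite -sqrtr_sqr ler_sqrt; last by rewrite sumr_ge0 // => j _; rewrite sqr_ge0.
by rewrite (bigD1 i) //= lerDl sumr_ge0 // => j _; rewrite sqr_ge0.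
Qed.

Lemma norm2Z (R : realType) d (a : R) (c : 'cV[R]_d) : norm2 (a *: c) = `|a| * norm2 c.
Proof.
rewrite /norm2 -sqrtr_sqr -sqrtrM ?sqr_ge0 // mulr_sumr.
by congr Num.sqrt; apply: eq_bigr => i _; rewrite mxE exprMn.
Qed.

Lemma mx_norm_le_norm2 (R : realType) d (c : 'cV[R]_d) : `|c| <= norm2 c.
Proof.
rewrite [leLHS]/Num.norm /= mx_normrE; apply: bigmax_le; first exact: norm2_ge0.
by move=> [i j] _ /=; rewrite ord1 norm2_entry.
Qed.

Lemma norm_lincomb_le (R : realType) (V : normedModType R) d (v : 'I_d -> V) c :
  `|lincomb v c| <= norm2 c * \sum_i `|v i|.
Proof.
rewrite mulr_sumr; apply: le_trans (ler_norm_sum _ _ _) _; apply: ler_sum => i _.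
by rewrite normrZ ler_wpM2r ?norm2_entry.
Qed.

Section Hessian.
Variables (R : realType) (H : normedModType R) (d : nat) (D : 'cV[R]_d -> H).
Hypothesis dD : forall v x, differentiable (fun y => 'd D y v) x.

Lemma hessDZl th (a : R) u v : hessD D th (a *: u) v = a *: hessD D th u v.
Proof. by rewrite /hessD [LHS]linearZ. Qed.

Lemma hessDZr th u (a : R) v : hessD D th u (a *: v) = a *: hessD D th u v.
Proof.
rewrite /hessD; have -> : (fun x => 'd D x (a *: v)) = a *: (fun x => 'd D x v).
  by apply/funext => x; rewrite fctE [LHS]linearZ.
exact: (congr1 (fun f => f u) (diffZ a (dD v th))).
Qed.

Lemma hessDDr th u v w : hessD D th u (v + w) = hessD D th u v + hessD D th u w.
Proof.
rewrite /hessD.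
have -> : (fun x => 'd D x (v + w)) = (fun x => 'd D x v) + (fun x => 'd D x w).
  by apply/funext => x; rewrite fctE [LHS]linearD.
exact: (congr1 (fun f => f u) (diffD (dD v th) (dD w th))).
Qed.

Lemma hessD_lincombr th u c :
  hessD D th u c = lincomb (fun j => hessD D th u (evec j)) c.
Proof.
rewrite -{1}[c]lincomb_evec /lincomb.
elim/big_rec2: _ => [|j y1 y2 _ <-]; last by rewrite hessDDr hessDZr.
by rewrite -(scale0r 0) hessDZr !scale0r.
Qed.

Lemma hessD_lincombl th c v :
  hessD D th c v = lincomb (fun i => hessD D th (evec i) v) c.
Proof.
rewrite /hessD -{1}[c]lincomb_evec [LHS]linear_sum.
by apply: eq_bigr => i _; rewrite [LHS]linearZ.
Qed.

Lemma hessD_diag_le th q :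
  `|hessD D th q q| <= norm2 q ^+ 2 * \sum_i \sum_j `|hessD D th (evec i) (evec j)|.
Proof.
rewrite hessD_lincombl expr2 -mulrA mulr_sumr.
apply: le_trans (norm_lincomb_le _ _) _; apply: ler_wpM2l; first exact: norm2_ge0.
by apply: ler_sum => i _; rewrite hessD_lincombr norm_lincomb_le.
Qed.

Lemma hessD_le_kappa_max th p : `|hessD D th p p| <= kappa_max D th * norm2 p ^+ 2.
Proof.
have [p0|pN0] := eqVneq (norm2 p) 0.
  by have := hessD_diag_le th p; rewrite p0 expr0n /= mul0r mulr0.
have n_gt0 : 0 < norm2 p by rewrite lt_def pN0 norm2_ge0.
set q := (norm2 p)^-1 *: p.
have q1 : norm2 q = 1 by rewrite norm2Z ger0_norm ?invr_ge0 ?norm2_ge0 // mulVf.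
have -> : p = norm2 p *: q by rewrite scalerA mulfV // scale1r.
rewrite hessDZr hessDZl scalerA normrZ norm2Z q1 mulr1 -expr2.
rewrite ger0_norm ?sqr_ge0 // ger0_norm ?norm2_ge0 // mulrC ler_wpM2r ?sqr_ge0 //.
apply: ub_le_sup; last by exists q.
exists (\sum_i \sum_j `|hessD D th (evec i) (evec j)|) => _ [r /= r1 <-].
by have := hessD_diag_le th r; rewrite r1 expr1n mul1r.
Qed.

Lemma psi_taylor th (eps : R) : 0 < eps -> exists2 del : R, 0 < del &
  forall y, `|y| < del -> forall i,
  `|psi D (th + y) i - psi D th i - hessD D th y (evec i)| <= eps * `|y|.
Proof.
move=> eps_gt0.
have small i : \forall y \near (0 : 'cV[R]_d),
    `|psi D (th + y) i - psi D th i - hessD D th y (evec i)| <= eps * `|y|.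
  have /eqaddoP := diff_locally (dD (evec i) th).
  move=> /(_ eps eps_gt0); apply: filterS => y; rewrite !fctE => approx.
  by rewrite -addrA -opprD [th + y]addrC; exact: approx.
have all_small := @filter_forall _ _ _ (nbhs (0 : 'cV[R]_d)) _ small.
have [del del_gt0 near0] := iffLR nbhs_norm0P (all_small _).
by exists del => // y y_lt i; apply: near0.
Qed.

Lemma psiT_shift_le th (eps : R) : 0 < eps -> exists2 del : R, 0 < del &
  forall (h : R) p, 0 < h -> h * norm2 p < del ->
  `|psiT D th p - psiT D (th - h *: p) p|
    <= h * kappa_max D th * norm2 p ^+ 2 + eps * (h * norm2 p ^+ 2).
Proof.
move=> eps_gt0; set c := eps / (d%:R + 1).
have d1_gt0 : 0 < d%:R + 1 :> R by rewrite ltr_wpDl ?ler0n.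
have c_gt0 : 0 < c by rewrite divr_gt0.
have [del del_gt0 taylor] := psi_taylor th c_gt0.
exists del => // h p h_gt0 hp_lt.
set n := norm2 p; set y := - (h *: p).
have y_le : `|y| <= h * n.
  by rewrite normrN normrZ gtr0_norm // ler_pM2l // mx_norm_le_norm2.
set r := fun i => psi D (th + y) i - psi D th i - hessD D th y (evec i).
have r_le i : `|r i| <= c * (h * n).
  exact: le_trans (taylor y (le_lt_trans y_le hp_lt) i) (ler_wpM2l (ltW c_gt0) y_le).
have hess_y i : hessD D th y (evec i) = - (h *: hessD D th p (evec i)).
  by rewrite /y -scaleNr hessDZl scaleNr.
have -> : psiT D th p - psiT D (th + y) p = h *: hessD D th p p - lincomb r p.
  rewrite (hessD_lincombr th p p) /psiT /lincomb scaler_sumr -!sumrB.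
  apply: eq_bigr => i _; rewrite /r hess_y.
  rewrite scalerA mulrC -scalerA -!scalerBr; congr (_ *: _).
  by rewrite opprK opprD opprB [RHS]addrC subrK.
apply: le_trans (ler_normB _ _) _; apply: lerD.
  by rewrite normrZ gtr0_norm // -mulrA ler_pM2l // hessD_le_kappa_max.
apply: le_trans (norm_lincomb_le _ _) _.
apply: le_trans (ler_wpM2l (norm2_ge0 p) (ler_sum _ (fun i _ => r_le i))) _.
rewrite sumr_const card_ord -mulr_natl.
have eps_c : eps = c * (d%:R + 1) by rewrite mulfVK ?gt_eqF.
have -> : eps * (h * n ^+ 2) = n * (d%:R * (c * (h * n))) + c * (h * n ^+ 2).
  by rewrite eps_c; ring.
by rewrite lerDl; apply: mulr_ge0 (ltW c_gt0) (mulr_ge0 (ltW h_gt0) (sqr_ge0 n)).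
Qed.

End Hessian.

Lemma psiT_sub_pinv_gram_le (R : realType) (H : normedModType R) (ip : H -> H -> R)
    d (D : 'cV[R]_d -> H) th (eps : R) :
  is_inner_product ip -> (forall v x, differentiable (fun y => 'd D y v) x) ->
  0 < eps -> exists2 del : R, 0 < del &
  forall (h : R) p, 0 < h -> h * norm2 p < del ->
  `|psiT D th p - psiT D th (mp_pinv (gram ip D th th) *m gram ip D th (th - h *: p) *m p)|
    <= h * kappa_max D th * norm2 p ^+ 2 + eps * (h * norm2 p ^+ 2).
Proof.
move=> ipH dD /(psiT_shift_le dD th) [del del_gt0 shift_le].
exists del => [//|h p h_gt0 hp_lt]; set B := mp_pinv (gram ip D th th).
have B_pinv : penrose (gram_mx ip (psi D th) (psi D th)) B := mp_pinvP _.
have B_sym : B^T = B by apply/mp_pinv_sym/matrixP => i j; rewrite !mxE ipC.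
exact: le_trans (lincomb_pinv_gram_le ipH _ p B_pinv B_sym) (shift_le h p h_gt0 hp_lt).
Qed.

Unset Implicit Arguments.
Set Strict Implicit.

Theorem mainTheorem3 (R : realType) (d : nat) (H : normedModType R)
  (ip : H -> H -> R) (D : 'cV[R]_d -> H) (Lf : H -> R) (G : 'M[R]_d)
  (thk : 'cV[R]_d) (hk beta : R) :
  is_inner_product ip -> C2 D -> (forall x, differentiable Lf x) ->
  sym_psd G -> 0 < hk -> 0 <= beta ->
  forall eps : R, 0 < eps -> exists delta : R, 0 < delta /\
  forall (hk1 : R) (pk1 : 'cV[R]_d), 0 < hk1 -> hk1 * norm2 pk1 < delta ->
  let thk1 := thk - hk1 *: pk1 in
  let pk := beta *: (mp_pinv (gram ip D thk thk) *m gram ip D thk thk1 *m pk1)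
            - hk *: (mp_pinv G *m gradL Lf D thk) in
  let pbar := beta *: pk1 - hk *: (mp_pinv G *m gradL Lf D thk) in
  `| psiT D thk pbar - psiT D thk pk |
    <= hk1 * beta * kappa_max D thk * norm2 pk1 ^+ 2
       + eps * (hk1 * norm2 pk1 ^+ 2).
Proof.
move=> ipH [_ dD _] _ _ _ beta_ge0 eps eps_gt0.
set eps' := eps / (beta + 1).
have beta1_gt0 : 0 < beta + 1 by rewrite ltr_wpDl.
have eps'_gt0 : 0 < eps' by rewrite divr_gt0.
have [del del_gt0 dist_le] := psiT_sub_pinv_gram_le thk ipH dD eps'_gt0.
exists del; split => // hk1 pk1 hk1_gt0 small; cbv zeta.
set g := mp_pinv G *m gradL Lf D thk.
set q := mp_pinv (gram ip D thk thk) *m gram ip D thk (thk - hk1 *: pk1) *m pk1.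
have -> : psiT D thk (beta *: pk1 - hk *: g) - psiT D thk (beta *: q - hk *: g) =
          beta *: (psiT D thk pk1 - psiT D thk q).
  rewrite /psiT -!/(lincomb (psi D thk) _) -[LHS]linearB opprB addrA subrK.
  by rewrite -scalerBr linearZ linearB.
rewrite normrZ ger0_norm //.
apply: le_trans (ler_wpM2l beta_ge0 (dist_le hk1 pk1 hk1_gt0 small)) _.
set n := norm2 pk1; set kap := kappa_max D thk.
have eps_e : eps = eps' * (beta + 1) by rewrite mulfVK ?gt_eqF.
have -> : hk1 * beta * kap * n ^+ 2 + eps * (hk1 * n ^+ 2) =
          beta * (hk1 * kap * n ^+ 2 + eps' * (hk1 * n ^+ 2)) + eps' * (hk1 * n ^+ 2).
  by rewrite {1}eps_e; ring.
by rewrite lerDl; apply: mulr_ge0 (ltW eps'_gt0) (mulr_ge0 (ltW hk1_gt0) (sqr_ge0 n)).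
Qed.
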